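(* Let $q:\chi\to[0,\infty)$ be a risk metric that is normalized and additive. A risk-sharing rule $\boldsymbol{C}$ on $\chi^n$ is the $q$-proportional RS rule if and only if it has strongly aggregate contribution-over-$q$ ratios.
   Context: Fix a probability space $(\Omega,\mathcal{F},\mathbb{P})$ and an integer $n\ge 1$. Let $\chi$ be a convex cone of non-negative random variables on this space (closed under addition and under multiplication by positive scalars) with $0\in\chi$. All equalities between random variables are understood almost surely. A pool is a vector $\boldsymbol{X}=(X_1,\ldots,X_n)\in\chi^n$, with aggregate loss $S_{\boldsymbol{X}}=\sum_{i=1}^n X_i$. A risk-sharing (RS) rule is a mapping $\boldsymbol{C}$ assigning to every pool $\boldsymbol{X}\in\chi^n$ a vector $\boldsymbol{C}[\boldsymbol{X}]=(C_1[\boldsymbol{X}],\ldots,C_n[\boldsymbol{X}])$ of real-valued random variables satisfying $\sum_{i=1}^n C_i[\boldsymbol{X}]=S_{\boldsymbol{X}}$. A risk metric $q:\chi\to[0,\infty)$ is normalized if $q[0]=0$ and additive if $q\left[\sum_{k=1}^n X_k\right]=\sum_{k=1}^n q[X_k]$ for every $\boldsymbol{X}\in\chi^n$. The $q$-proportional RS rule is specified only on pools with $q[X_j]>0$ for at least one $j$, where it is given by $C_i[\boldsymbol{X}]=\frac{q[X_i]}{\sum_{k=1}^n q[X_k]}S_{\boldsymbol{X}}$ for $i=1,\ldots,n$; a rule ''is the $q$-proportional RS rule'' if its contributions equal these on every such pool. The rule $\boldsymbol{C}$ has strongly aggregate contribution-over-$q$ ratios if there exists a function $\mathbf{h}=(h_1,\ldots,h_n):\mathbb{R}^2\to\mathbb{R}^n$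 (the same for all pools) such that for every pool $\boldsymbol{X}$ with $q[X_j]>0$ for at least one $j$, $C_i[\boldsymbol{X}]=q[X_i]\,h_i\big(S_{\boldsymbol{X}},q[S_{\boldsymbol{X}}]\big)$ for all $i=1,\ldots,n$. *)

From HB Require Import structures.
From mathcomp Require Import all_boot all_order all_algebra.
From mathcomp Require Import all_classical all_reals all_analysis.
Set Implicit Arguments. Unset Strict Implicit. Unset Printing Implicit Defensive.
Import Order.TTheory GRing.Theory Num.Theory.
Local Open Scope classical_set_scope.
Local Open Scope ring_scope.

Section RiskSharing.
Context {d : measure_display} {Omega : measurableType d} {R : realType}.

Definition is_cone (chi : set (Omega -> R)) : Prop :=
  chi (fun _ => 0) /\
  (forall X Y, chi X -> chi Y -> chi (fun w => X w + Y w)) /\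
  (forall (c : R) X, 0 < c -> chi X -> chi (fun w => c * X w)).

Definition nonneg_rvs (chi : set (Omega -> R)) : Prop :=
  forall X, chi X -> measurable_fun setT X /\ (forall w, 0 <= X w).

Definition is_pool (n : nat) (chi : set (Omega -> R)) (X : 'I_n -> Omega -> R) : Prop :=
  forall i, chi (X i).

Definition aggS (n : nat) (X : 'I_n -> Omega -> R) : Omega -> R :=
  fun w => \sum_(i < n) X i w.

Definition normalized (q : (Omega -> R) -> R) : Prop := q (fun _ => 0) = 0.

Definition additive_metric (n : nat) (chi : set (Omega -> R)) (q : (Omega -> R) -> R) : Prop :=
  forall X : 'I_n -> Omega -> R, is_pool chi X -> q (aggS X) = \sum_(k < n) q (X k).

Definition is_RS_rule (P : probability Omega R) (n : nat) (chi : set (Omega -> R))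
  (C : ('I_n -> Omega -> R) -> 'I_n -> Omega -> R) : Prop :=
  forall X, is_pool chi X ->
    (forall i, measurable_fun setT (C X i)) /\
    {ae P, forall w, \sum_(i < n) C X i w = aggS X w}.

Definition is_q_proportional (P : probability Omega R) (n : nat) (chi : set (Omega -> R))
  (q : (Omega -> R) -> R) (C : ('I_n -> Omega -> R) -> 'I_n -> Omega -> R) : Prop :=
  forall X, is_pool chi X -> (exists j, 0 < q (X j)) ->
    forall i, {ae P, forall w,
      C X i w = q (X i) / (\sum_(k < n) q (X k)) * aggS X w}.

(* h : R^2 -> R^n, curried *)
Definition strongly_aggregate_ratios (P : probability Omega R) (n : nat)
  (chi : set (Omega -> R)) (q : (Omega -> R) -> R)
  (C : ('I_n -> Omega -> R) -> 'I_n -> Omega -> R) : Prop :=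
  exists h : R -> R -> 'I_n -> R,
    forall X, is_pool chi X -> (exists j, 0 < q (X j)) ->
      forall i, {ae P, forall w,
        C X i w = q (X i) * h (aggS X w) (q (aggS X)) i}.

End RiskSharing.

From HB Require Import structures.
From mathcomp Require Import all_boot all_order all_algebra.
From mathcomp Require Import all_classical all_reals all_analysis.
Import Order.TTheory GRing.Theory Num.Theory.
Local Open Scope classical_set_scope.
Local Open Scope ring_scope.

(* The q-proportional rule has the ratio function h(s, t) = s / t,
   since additivity makes q[S_X] the sum of the q[X_k]. Conversely, feeding
   the rule the pool in which participant i carries a whole risk S and everyone
   else carries 0 forces q[S] h_i(S, q[S]) = S, because the other
   contributions vanish (q[0] = 0); so h_i(S, q[S]) = S / q[S], which is the
   q-proportional ratio. *)

Section ProportionalRule.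
Context {d : measure_display} {Omega : measurableType d} {R : realType}.
Variables (P : probability Omega R) (n : nat) (chi : set (Omega -> R)).
Variables (q : (Omega -> R) -> R) (C : ('I_n -> Omega -> R) -> 'I_n -> Omega -> R).

Definition ratio_representation (h : R -> R -> 'I_n -> R) : Prop :=
  forall X, is_pool chi X -> (exists j, 0 < q (X j)) ->
    forall i, {ae P, forall w,
      C X i w = q (X i) * h (aggS X w) (q (aggS X)) i}.

Lemma cone_aggS (X : 'I_n -> Omega -> R) :
  is_cone chi -> is_pool chi X -> chi (aggS X).
Proof.
move=> [chi0 [chiD _]] pX; rewrite /aggS.
elim: (index_enum 'I_n) => [|k s IH].
  by under eq_fun do rewrite big_nil.
by under eq_fun do rewrite big_cons; exact: chiD.
Qed.

Lemma additive_aggS_gt0 (X : 'I_n -> Omega -> R) (j : 'I_n) :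
  (forall Y, chi Y -> 0 <= q Y) -> additive_metric n chi q ->
  is_pool chi X -> 0 < q (X j) -> 0 < q (aggS X).
Proof.
move=> qge0 qadd pX qj; rewrite qadd // (bigD1 j) //=.
by rewrite ltr_pwDl // sumr_ge0 // => k _; exact: qge0.
Qed.

Definition single_risk_pool (i : 'I_n) (S : Omega -> R) : 'I_n -> Omega -> R :=
  fun k => if k == i then S else (fun _ => 0).

Lemma single_risk_poolE (i : 'I_n) (S : Omega -> R) :
  single_risk_pool i S i = S.
Proof. by rewrite /single_risk_pool eqxx. Qed.

Lemma single_risk_pool_pool (i : 'I_n) (S : Omega -> R) :
  is_cone chi -> chi S -> is_pool chi (single_risk_pool i S).
Proof. by move=> [chi0 _] chiS k; rewrite /single_risk_pool; case: (k == i). Qed.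

Lemma aggS_single_risk_pool (i : 'I_n) (S : Omega -> R) :
  aggS (single_risk_pool i S) = S.
Proof.
apply: funext => w; rewrite /aggS (bigD1 i) //= single_risk_poolE big1 ?addr0 //.
by move=> k /negbTE ki; rewrite /single_risk_pool ki.
Qed.

Lemma ratio_representation_single_risk (h : R -> R -> 'I_n -> R)
    (S : Omega -> R) (i : 'I_n) :
  is_cone chi -> normalized q -> is_RS_rule P chi C ->
  ratio_representation h -> chi S -> 0 < q S ->
  {ae P, forall w, h (S w) (q S) i = S w / q S}.
Proof.
move=> cone q0 RS hC chiS qS_gt0.
set Y := single_risk_pool i S.
have pY : is_pool chi Y by exact: single_risk_pool_pool.
have aggY : aggS Y = S by exact: aggS_single_risk_pool.
have qY : exists k, 0 < q (Y k) by exists i; rewrite /Y single_risk_poolE.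
have hY := filter_forall (ae_filter_ringOfSetsType P) (fun k => hC Y pY qY k).
have [_ sumY] := RS Y pY.
apply: filterS (filterI hY sumY) => w [{}hY].
rewrite aggY (bigD1 i) //= big1 => [|k /negbTE ki]; last first.
  by rewrite hY /Y /single_risk_pool ki q0 mul0r.
rewrite addr0 hY aggY /Y single_risk_poolE => sumYw.
by rewrite -[in RHS]sumYw [q S * _]mulrC mulfK ?gt_eqF.
Qed.

Lemma q_proportional_ratio_representation :
  additive_metric n chi q -> is_q_proportional P chi q C ->
  ratio_representation (fun s t _ => s / t).
Proof.
move=> qadd qprop X pX qX i; apply: filterS (qprop X pX qX i) => w ->.
by rewrite qadd // mulrA mulrAC.
Qed.

Lemma ratio_representation_q_proportional (h : R -> R -> 'I_n -> R) :
  is_cone chi -> (forall X, chi X -> 0 <= q X) -> normalized q ->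
  additive_metric n chi q -> is_RS_rule P chi C ->
  ratio_representation h -> is_q_proportional P chi q C.
Proof.
move=> cone qge0 q0 qadd RS hC X pX [j qj] i.
have qS_gt0 := additive_aggS_gt0 X j qge0 qadd pX qj.
have hS := ratio_representation_single_risk h _ i cone q0 RS hC
  (cone_aggS X cone pX) qS_gt0.
apply: filterS (filterI hS (hC X pX (ex_intro _ j qj) i)) => w [hSw ->].
by rewrite hSw -qadd // mulrA mulrAC.
Qed.

End ProportionalRule.

Theorem theorem4 (d : measure_display) (Omega : measurableType d) (R : realType)
  (P : probability Omega R) (n : nat) (chi : set (Omega -> R))
  (q : (Omega -> R) -> R) (C : ('I_n -> Omega -> R) -> 'I_n -> Omega -> R) :
  (0 < n)%N ->
  is_cone chi -> nonneg_rvs chi ->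
  (forall X, chi X -> 0 <= q X) ->
  normalized q -> additive_metric n chi q ->
  is_RS_rule P chi C ->
  (is_q_proportional P chi q C <-> strongly_aggregate_ratios P chi q C).
Proof.
move=> _ cone _ qge0 q0 qadd RS; split.
- by move=> qprop; exists (fun s t _ => s / t);
    exact: q_proportional_ratio_representation.
- move=> [h hC].
  exact: (ratio_representation_q_proportional P n chi q C h cone qge0 q0 qadd RS hC).
Qed.
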